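(* There is no function $f : \mathbb{N} \to (0,+\infty)$ such that $\mathsf{LowerCalDist}(x,p) \ge f(T)\cdot \mathsf{CalDist}(x,p)$ holds for all positive integers $T$, all $x \in \{0,1\}^T$ and all $p \in [0,1]^T$.
   Context: For $x \in \{0,1\}^T$, let $\mathcal{C}(x) = \{q \in [0,1]^T : \sum_{t=1}^T (x_t - q_t)\mathbf{1}[q_t = \alpha] = 0 \text{ for all } \alpha \in [0,1]\}$ and $\mathsf{CalDist}(x,p) = \min_{q \in \mathcal{C}(x)} \|p-q\|_1$. Let $\underline{\mathcal{C}}(x)$ be the set of $T$-tuples $\mathcal{D} = (\mathcal{D}_1,\ldots,\mathcal{D}_T)$ of probability distributions, each with finite support contained in $[0,1]$, such that $\sum_{t=1}^T (x_t - \alpha)\mathcal{D}_t(\alpha) = 0$ for every $\alpha \in [0,1]$. Then $\mathsf{LowerCalDist}(x,p) = \inf_{\mathcal{D} \in \underline{\mathcal{C}}(x)} \sum_{t=1}^T \mathbb{E}_{q_t \sim \mathcal{D}_t}|p_t - q_t|$. *)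

From mathcomp Require Import all_boot all_order all_algebra.
From mathcomp Require Import classical_sets boolp reals.
Set Implicit Arguments. Unset Strict Implicit. Unset Printing Implicit Defensive.
Import Order.TTheory GRing.Theory Num.Theory.
Local Open Scope ring_scope.
Local Open Scope classical_set_scope.

Section CalDefs.
Variable R : realType.
Variable T : nat.

(* x in {0,1}^T is a function 'I_T -> bool, read as 0/1 via b%:R *)
Definition unit_vec (p : 'I_T -> R) : Prop := forall t, 0 <= p t <= 1.

Definition calibrated_set (x : 'I_T -> bool) : set ('I_T -> R) :=
  [set q | unit_vec q /\
     forall alpha : R, 0 <= alpha <= 1 ->
       \sum_(t < T) ((x t)%:R - q t) * (q t == alpha)%:R = 0].

Definition l1dist (p q : 'I_T -> R) : R := \sum_(t < T) `|p t - q t|.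

(* CalDist(x,p) = min_{q in C(x)} ||p - q||_1 ; the minimum is attained,
   so it coincides with the infimum used here. *)
Definition CalDist (x : 'I_T -> bool) (p : 'I_T -> R) : R :=
  inf [set d | exists2 q, calibrated_set x q & d = l1dist p q].

(* A T-tuple of finitely supported probability distributions on [0,1] is
   encoded by a finite duplicate-free list S of reals containing the union of
   the supports, and the mass functions D t : R -> R. *)
Definition lower_calibrated (x : 'I_T -> bool) (S : seq R) (D : 'I_T -> R -> R)
  : Prop :=
  [/\ uniq S,
      (forall t a, D t a <> 0 -> a \in S),
      (forall t a, 0 <= D t a),
      (forall t a, D t a <> 0 -> 0 <= a <= 1) &
      (forall t, \sum_(a <- S) D t a = 1)] /\
      (forall alpha : R, 0 <= alpha <= 1 ->
         \sum_(t < T) ((x t)%:R - alpha) * D t alpha = 0).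

Definition lower_cost (p : 'I_T -> R) (S : seq R) (D : 'I_T -> R -> R) : R :=
  \sum_(t < T) \sum_(a <- S) D t a * `|p t - a|.

Definition LowerCalDist (x : 'I_T -> bool) (p : 'I_T -> R) : R :=
  inf [set d | exists S D, lower_calibrated x S D /\ d = lower_cost p S D].

End CalDefs.

(* Take the outcomes x = (0,1,0,1) and the forecast p = (hi,hi,lo,lo), where hi
   and lo lie within O(m) of 1/2 on either side.  A randomized calibrated
   predictor may copy p on the first three rounds and hedge on the last one,
   predicting hi with probability m and lo otherwise; hi and lo are chosen so
   that both levels are then exactly calibrated, and the expected distance to p
   is m (hi - lo) = O(m^2).  A deterministic calibrated q, on the other hand,
   takes at each level the value k/n of a frequency with n <= 4, so a value
   in (1/3, 2/3) must be 1/2 and q must move p_0 by at least m/5.  Hence the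
   ratio LowerCalDist / CalDist at T = 4 tends to 0 with m. *)

From mathcomp Require Import all_boot all_order all_algebra.
From mathcomp Require Import classical_sets boolp reals.
From mathcomp Require Import lra zify.
Set Implicit Arguments. Unset Strict Implicit. Unset Printing Implicit Defensive.
Import Order.TTheory GRing.Theory Num.Theory.
Local Open Scope ring_scope.

Section Calibration.
Variables (R : realType) (T : nat).
Implicit Types (x : 'I_T -> bool) (p q : 'I_T -> R).

Definition mean x : R := (\sum_(t < T) (x t)%:R) / T%:R.

Lemma sum_eq_mean x : \sum_(t < T) (x t)%:R = T%:R * mean x.
Proof.
have [T0|T0] := posnP T; last by rewrite /mean mulrC divfK // pnatr_eq0 -lt0n.
rewrite big1 => [|t _]; first by rewrite T0 mul0r.
by have := ltn_ord t; rewrite [X in (_ < X)%N]T0.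
Qed.

Lemma calibrated_mean x : calibrated_set x (fun=> mean x).
Proof.
split=> [t|a _] /=.
  have T0 : (0 < T)%N := leq_ltn_trans (leq0n t) (ltn_ord t).
  have sum_le : \sum_(t < T) (x t)%:R <= T%:R :> R.
    rewrite -[T in T%:R]card_ord -sumr_const.
    by apply: ler_sum => s _; case: (x s); rewrite ?ler01 ?lexx.
  by rewrite /mean divr_ge0 ?sumr_ge0 // ler_pdivrMr ?mul1r // ltr0n.
case: eqP => [_|_]; last by rewrite big1 // => t _; rewrite mulr0.
under eq_bigr do rewrite mulr1.
by rewrite sumrB sumr_const card_ord sum_eq_mean mulr_natl subrr.
Qed.

Lemma CalDist_ge x p b :
  (forall q, calibrated_set x q -> b <= l1dist p q) -> b <= CalDist x p.
Proof.
move=> lb; apply: lb_le_inf => [|_ [q cq ->]]; last exact: lb.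
exists (l1dist p (fun=> mean x)), (fun=> mean x) => //.
exact: calibrated_mean.
Qed.

Lemma l1dist_ge_coord p q t : `|p t - q t| <= l1dist p q.
Proof. by rewrite /l1dist (bigD1 t) //= lerDl sumr_ge0. Qed.

Lemma LowerCalDist_le x p S D :
  lower_calibrated x S D -> LowerCalDist x p <= lower_cost p S D.
Proof.
move=> cD; apply: ge_inf; last by exists S, D.
exists 0 => _ [S' [D' [[[_ _ D'ge0 _ _] _] ->]]].
by do 2![apply: sumr_ge0 => ? _]; rewrite mulr_ge0.
Qed.

Lemma sum_indicator (P : pred 'I_T) : \sum_(t < T) (P t)%:R = #|P|%:R :> R.
Proof.
rewrite (eq_bigr (fun t => if P t then 1 else 0)) => [|t _]; last first.
  by case: (P t).
by rewrite -big_mkcond sumr_const.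
Qed.

Lemma calibrated_level x q t : calibrated_set x q ->
  q t * #|[pred s | q s == q t]|%:R = #|[pred s | x s && (q s == q t)]|%:R.
Proof.
case=> q01 /(_ (q t) (q01 t)) /eqP.
under eq_bigr => s _ do rewrite mulrBl.
rewrite sumrB subr_eq0 => /eqP level_eq.
rewrite -!sum_indicator mulr_sumr.
transitivity (\sum_(s < T) q s * (q s == q t)%:R).
  by apply: eq_bigr => s _ /=; case: eqP => [->|_]; rewrite ?mulr1 ?mulr0.
rewrite -level_eq; apply: eq_bigr => s _ /=.
by case: (x s); rewrite ?mul1r ?mul0r.
Qed.

Lemma calibrated_between_thirds x q t : (T <= 4)%N -> calibrated_set x q ->
  1/3 < q t < 2/3 -> q t = 1/2.
Proof.
move=> T4 cq qt; have := calibrated_level t cq.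
set n := #|_|; set k := #|_| => lvl.
have n_le4 : (n <= 4)%N by rewrite (leq_trans (max_card _)) ?card_ord.
have k_le_n : (k <= n)%N.
  by apply: subset_leq_card; apply/fintype.subsetP => s /andP[].
have n_gt0 : (0 < n)%N by apply/card_gt0P; exists t; rewrite inE.
have n0 : 0 < n%:R :> R by rewrite ltr0n.
have lt_n_3k : (n < 3 * k)%N by rewrite -(ltr_nat R) natrM -lvl; nra.
have lt_3k_2n : (3 * k < 2 * n)%N by rewrite -(ltr_nat R) !natrM -lvl; nra.
have n_eq : n = (2 * k)%N by lia.
rewrite n_eq natrM in lvl; have k0 : 0 < k%:R :> R by rewrite ltr0n; lia.
nra.
Qed.

End Calibration.

Lemma sum_ord4 (V : nmodType) (F : 'I_4 -> V) :
  \sum_(t < 4) F t = F (inord 0) + F (inord 1) + F (inord 2) + F (inord 3).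
Proof.
rewrite !big_ord_recr big_ord0 /= add0r.
by congr (F _ + F _ + F _ + F _); apply: val_inj; rewrite /= inordK.
Qed.

Section HedgedExample.
Variables (R : realType) (m : R).
Hypotheses (m_gt0 : 0 < m) (m_small : m <= 1/10).

Definition alternating : 'I_4 -> bool := odd.

(* The unique solutions of the calibration equations of [hedge] at its two
   levels: [1 - 2 h + m (1 - h) = 0] for [h = level_hi] and
   [(1 - m) (1 - l) - l = 0] for [l = level_lo]. *)
Definition level_hi : R := (1 + m) / (2 + m).
Definition level_lo : R := (1 - m) / (2 - m).

Definition split_forecast (t : 'I_4) : R :=
  if (t < 2)%N then level_hi else level_lo.

Definition hedge (t : 'I_4) (a : R) : R :=
  if (t < 2)%N then (a == level_hi)%:R
  else if (t < 3)%N then (a == level_lo)%:R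
  else m * (a == level_hi)%:R + (1 - m) * (a == level_lo)%:R.

Lemma mul_level_hi : (2 + m) * level_hi = 1 + m.
Proof. by rewrite /level_hi mulrC divfK // lt0r_neq0 // addr_gt0. Qed.

Lemma mul_level_lo : (2 - m) * level_lo = 1 - m.
Proof.
by rewrite /level_lo mulrC divfK // lt0r_neq0 //; have := m_small; lra.
Qed.

Lemma level_bounds :
  [/\ 1/2 + m/5 <= level_hi, level_hi <= 1/2 + m/4,
      1/2 - m/2 <= level_lo & level_lo < 1/2].
Proof.
have := m_gt0; have := m_small.
have := mul_level_hi; have := mul_level_lo => *.
by split; nra.
Qed.

Lemma split_forecast_unit : unit_vec split_forecast.
Proof.
have [? ? ? ?] := level_bounds; have ? := m_small.
by move=> t; rewrite /split_forecast; case: ifP => _; apply/andP; split; lra.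
Qed.

Lemma level_hi_neq_lo : (level_hi == level_lo) = false.
Proof. by have [? ? ? ?] := level_bounds; apply/eqP => ?; lra. Qed.

Lemma level_lo_neq_hi : (level_lo == level_hi) = false.
Proof. by rewrite eq_sym level_hi_neq_lo. Qed.

Lemma hedge_support t a : hedge t a <> 0 -> a \in [:: level_hi; level_lo].
Proof.
rewrite !inE /hedge.
case: (a =P level_hi) => [//|_]; case: (a =P level_lo) => [//|_] /=.
by rewrite !(mulr0n, mulr0, addr0); case: ifP => _ //; case: ifP.
Qed.

Lemma hedge_lower_calibrated :
  lower_calibrated alternating [:: level_hi; level_lo] hedge.
Proof.
have [? ? ? ?] := level_bounds; have ? := m_gt0; have ? := m_small.
split; [split|].
- by rewrite /= inE level_hi_neq_lo.
- exact: hedge_support.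
- move=> t a; rewrite /hedge.
  case: ifP => _; [|case: ifP => _]; rewrite ?ler0n //.
  by rewrite addr_ge0 // mulr_ge0 ?ler0n //; lra.
- move=> t a /hedge_support; rewrite !inE => /orP[] /eqP ->;
    by apply/andP; split; lra.
- move=> t; rewrite !big_cons big_nil addr0 /hedge.
  rewrite !eqxx level_hi_neq_lo level_lo_neq_hi /=.
  by case: ifP => _; [|case: ifP => _]; rewrite ?mulr0n ?mulr1n; lra.
- move=> a _; have := mul_level_hi; have := mul_level_lo => *.
  rewrite sum_ord4 /alternating /hedge !inordK //=.
  case: (a =P level_hi) => [->|_]; last case: (a =P level_lo) => [->|_];
    rewrite ?eqxx ?level_hi_neq_lo ?level_lo_neq_hi /= ?mulr0n ?mulr1n; nra.
Qed.

Lemma lower_cost_hedge :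
  lower_cost split_forecast [:: level_hi; level_lo] hedge
  = m * (level_hi - level_lo).
Proof.
have [? ? ? ?] := level_bounds.
rewrite /lower_cost sum_ord4 !big_cons !big_nil /hedge /split_forecast.
rewrite !inordK //=.
rewrite !eqxx level_hi_neq_lo level_lo_neq_hi !subrr normr0.
rewrite (distrC level_lo) ger0_norm //; last lra.
by rewrite /= ?mulr0n ?mulr1n; lra.
Qed.

Lemma CalDist_split_forecast_ge : m / 5 <= CalDist alternating split_forecast.
Proof.
have [? ? ? ?] := level_bounds; have ? := m_gt0; have ? := m_small.
apply: CalDist_ge => q cq; apply: le_trans (l1dist_ge_coord _ _ ord0).
rewrite /split_forecast /=; have [mid|] := boolP (1/3 < q ord0 < 2/3).
  by rewrite (calibrated_between_thirds _ cq mid) // ger0_norm; lra.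
rewrite negb_and -!leNgt => /orP[] ?.
  by rewrite ger0_norm; lra.
by rewrite ler0_norm; lra.
Qed.

End HedgedExample.

Theorem proposition2 (R : realType) :
  ~ (exists f : nat -> R,
       (forall n, 0 < f n) /\
       (forall (T : nat), (0 < T)%N ->
          forall (x : 'I_T -> bool) (p : 'I_T -> R), unit_vec p ->
            f T * CalDist x p <= LowerCalDist x p)).
Proof.
move=> [f [f_gt0 f_le]]; set c := f 4%N; have c_gt0 : 0 < c := f_gt0 4%N.
pose m := Num.min (c / 10) (1 / 10).
have m_gt0 : 0 < m by rewrite lt_min; apply/andP; split; lra.
have m_small : m <= 1 / 10 by rewrite ge_min lexx orbT.
have m_le_c : m <= c / 10 by rewrite ge_min lexx.
have [_ hi_le lo_ge _] := level_bounds m_gt0 m_small.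
have lower_ge : c * (m / 5) <= LowerCalDist alternating (split_forecast m).
  apply: le_trans (f_le 4%N isT _ _ (split_forecast_unit m_gt0 m_small)).
  by rewrite ler_pM2l //; exact: CalDist_split_forecast_ge.
have lower_le : LowerCalDist alternating (split_forecast m) <= m * (3 / 4 * m).
  apply: le_trans (LowerCalDist_le _ (hedge_lower_calibrated m_gt0 m_small)) _.
  by rewrite lower_cost_hedge // ler_pM2l //; lra.
have := le_trans lower_ge lower_le; have := mulr_gt0 c_gt0 m_gt0.
have : m * m <= m * (c / 10) by rewrite ler_pM2l.
nra.
Qed.
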